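(* Let $\phi:\mathbb{R}^{n\times n}\to\mathbb{R}$ be differentiable and $L$-gradient Lipschitz, and let $M^\star=\arg\min\phi$ satisfy $M^\star\succeq0$. Let $f(X)=\phi(XX^T)$. Then for all $X,V\in\mathbb{R}^{n\times r}$ and $\eta\ge0$ with $\lambda_{\min}(X^TX)+\eta>0$, \[ f(X+V)\le f(X)+\langle\nabla f(X),V\rangle+\frac{\ell_{X,\eta}}2\|V\|_{X,\eta}^2, \] where \[ \ell_{X,\eta}=L\left[4+\frac{2\|XX^T-M^\star\|_F+4\|V\|_{X,\eta}}{\lambda_{\min}(X^TX)+\eta}+\left(\frac{\|V\|_{X,\eta}}{\lambda_{\min}(X^TX)+\eta}\right)^2\right]. \]
   Context: $\phi$ is $L$-gradient Lipschitz if $\|\nabla\phi(M+E)-\nabla\phi(M)\|_F\le L\|E\|_F$ for all $M,E$. The local norm is $\|V\|_{X,\eta}=\|V(X^TX+\eta I)^{1/2}\|_F$. $\langle A,B\rangle=\operatorname{tr}(A^TB)$. *)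

From HB Require Import structures.
From mathcomp Require Import all_boot all_order all_algebra.
From mathcomp Require Import all_classical all_reals all_analysis.
Set Implicit Arguments. Unset Strict Implicit. Unset Printing Implicit Defensive.
Import Order.TTheory GRing.Theory Num.Theory.
Import numFieldNormedType.Exports.
Local Open Scope ring_scope.

Definition frob_inner (R : realType) (m n : nat) (A B : 'M[R]_(m, n)) : R :=
  \tr (A^T *m B).

Definition frob (R : realType) (m n : nat) (A : 'M[R]_(m, n)) : R :=
  Num.sqrt (\sum_(i < m) \sum_(j < n) A i j ^+ 2).

Definition grad (R : realType) (m n : nat) (f : 'M[R]_(m, n) -> R)
  (X : 'M[R]_(m, n)) : 'M[R]_(m, n) :=
  \matrix_(i < m, j < n) 'D_(delta_mx i j) f X.

Definition psd (R : realType) (n : nat) (M : 'M[R]_n) : Prop :=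
  M^T = M /\ forall x : 'cV[R]_n, 0 <= (x^T *m M *m x) 0 0.

Definition is_lambda_min (R : realType) (n : nat) (A : 'M[R]_n) (lam : R) : Prop :=
  eigenvalue A lam /\ forall b : R, eigenvalue A b -> lam <= b.

From HB Require Import structures.
From mathcomp Require Import all_boot all_order all_algebra.
From mathcomp Require Import all_classical all_reals all_analysis.
From mathcomp Require Import ring lra.
Import Order.TTheory GRing.Theory Num.Theory.
Import numFieldNormedType.Exports.

Set Implicit Arguments.
Unset Strict Implicit.
Unset Printing Implicit Defensive.
Local Open Scope ring_scope.
Local Open Scope classical_set_scope.

(* Apply the descent lemma for phi at M = X X^T to the increment
   E = V X^T + X V^T + V V^T; since <grad f(X), V> = <grad phi(M), V X^T + X V^T>,
   this bounds f(X + V) by f(X) + <grad f(X), V> + <grad phi(M), V V^T> + L/2 |E|^2.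
   The gradient vanishes at the minimiser M*, so |grad phi(M)| <= L |M - M*|.
   With c = lam_min(X^T X) + eta and |V|_{X,eta}^2 = |V X^T|^2 + eta |V|^2, the
   Rayleigh bound lam_min |v|^2 <= |v X^T|^2 on the rows of V gives
   c |V|^2 <= |V|_{X,eta}^2, hence |V V^T| <= |V|_{X,eta}^2 / c and
   |E| <= 2 |V|_{X,eta} + |V|_{X,eta}^2 / c; expanding yields ell_{X,eta}.
   The Rayleigh bound holds because a minimiser of x A x^T on the unit sphere is an
   eigenvector of A. *)

Lemma sqr_sum_mul_le (R : realType) (I : finType) (a b : I -> R) :
  (\sum_i a i * b i) ^+ 2 <= (\sum_i a i ^+ 2) * (\sum_i b i ^+ 2).
Proof.
have sum_mul (f g : I -> R) : (\sum_i f i) * (\sum_j g j) = \sum_i \sum_j f i * g j.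
  by rewrite big_distrl; apply: eq_bigr => i _; rewrite big_distrr.
have lagrange : 0 <= \sum_i \sum_j (a i * b j - a j * b i) ^+ 2.
  by apply: sumr_ge0 => i _; apply: sumr_ge0 => j _; apply: sqr_ge0.
have expand : \sum_i \sum_j (a i * b j - a j * b i) ^+ 2 =
    \sum_i \sum_j a i ^+ 2 * b j ^+ 2 + \sum_i \sum_j b i ^+ 2 * a j ^+ 2
    - 2 * \sum_i \sum_j (a i * b i) * (a j * b j).
  rewrite mulr_sumr -big_split -sumrB; apply: eq_bigr => i _ /=.
  rewrite mulr_sumr -big_split -sumrB; apply: eq_bigr => j _ /=; ring.
rewrite expand -!sum_mul in lagrange; lra.
Qed.

Section Frobenius.
Variables (R : realType) (m n : nat).
Implicit Types A B E : 'M[R]_(m, n).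

Lemma frob_innerE A B : frob_inner A B = \sum_i \sum_j A i j * B i j.
Proof.
rewrite /frob_inner /mxtrace exchange_big /=; apply: eq_bigr => j _.
by rewrite mxE; apply: eq_bigr => i _; rewrite mxE.
Qed.

Lemma frob_ge0 A : 0 <= frob A.
Proof. exact: sqrtr_ge0. Qed.

Lemma sqr_frob A : frob A ^+ 2 = \sum_i \sum_j A i j ^+ 2.
Proof.
by rewrite sqr_sqrtr //; apply: sumr_ge0 => i _; apply: sumr_ge0 => j _; apply: sqr_ge0.
Qed.

Lemma frob_inner_self A : frob_inner A A = frob A ^+ 2.
Proof.
rewrite frob_innerE sqr_frob; apply: eq_bigr => i _.
by apply: eq_bigr => j _; rewrite expr2.
Qed.

Lemma frob_innerDr A B E : frob_inner A (B + E) = frob_inner A B + frob_inner A E.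
Proof. by rewrite /frob_inner mulmxDr mxtraceD. Qed.

Lemma frob_innerBl A B E : frob_inner (A - B) E = frob_inner A E - frob_inner B E.
Proof. by rewrite /frob_inner linearB mulmxBl linearB. Qed.

Lemma frob_inner_le A B : frob_inner A B <= frob A * frob B.
Proof.
have : frob_inner A B ^+ 2 <= (frob A * frob B) ^+ 2.
  rewrite exprMn !sqr_frob frob_innerE !pair_big /=.
  exact: (sqr_sum_mul_le (fun p => A p.1 p.2) (fun p => B p.1 p.2)).
have := mulr_ge0 (frob_ge0 A) (frob_ge0 B).
move: (frob A * frob B) => y; nra.
Qed.

Lemma ler_frobD A B : frob (A + B) <= frob A + frob B.
Proof.
have sqrD : frob (A + B) ^+ 2 = frob A ^+ 2 + 2 * frob_inner A B + frob B ^+ 2.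
  rewrite -!frob_inner_self /frob_inner [(A + B)^T]raddfD /= mulmxDl !mulmxDr !mxtraceD.
  rewrite -[\tr (B^T *m A)]mxtrace_tr trmx_mul trmxK; ring.
have := frob_inner_le A B; have := frob_ge0 A; have := frob_ge0 B.
have := frob_ge0 (A + B); nra.
Qed.

Lemma frobZ (c : R) A : frob (c *: A) = `|c| * frob A.
Proof.
rewrite /frob -sqrtr_sqr -sqrtrM ?sqr_ge0 // mulr_sumr; congr Num.sqrt.
by apply: eq_bigr => i _; rewrite mulr_sumr; apply: eq_bigr => j _; rewrite mxE exprMn.
Qed.

Lemma frob_trmx A : frob A^T = frob A.
Proof.
rewrite /frob exchange_big; congr Num.sqrt.
by apply: eq_bigr => j _; apply: eq_bigr => i _; rewrite mxE.
Qed.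

Lemma frob0 : frob (0 : 'M[R]_(m, n)) = 0.
Proof. by have := frobZ 0 (0 : 'M[R]_(m, n)); rewrite scale0r normr0 mul0r. Qed.

Lemma sqr_le_sqr_frob A i j : A i j ^+ 2 <= frob A ^+ 2.
Proof.
rewrite sqr_frob (bigD1 i) //= (bigD1 j) //= -addrA lerDl.
by apply: addr_ge0; do ?[apply: sumr_ge0 => ? _]; apply: sqr_ge0.
Qed.

Lemma frob0_eq0 A : frob A = 0 -> A = 0.
Proof.
move=> A0; apply/matrixP => i j; have := sqr_le_sqr_frob A i j.
rewrite A0 expr0n mxE /= => Aij_le0.
by apply/eqP; rewrite -sqrf_eq0 eq_le Aij_le0 sqr_ge0.
Qed.

End Frobenius.

Lemma sqr_frob_rows (R : realType) m n (A : 'M[R]_(m, n)) :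
  frob A ^+ 2 = \sum_i frob (row i A) ^+ 2.
Proof.
rewrite sqr_frob; apply: eq_bigr => i _; rewrite sqr_frob big_ord1.
by apply: eq_bigr => j _; rewrite mxE.
Qed.

Lemma ler_frob_mulmx (R : realType) m n p (A : 'M[R]_(m, n)) (B : 'M[R]_(n, p)) :
  frob (A *m B) <= frob A * frob B.
Proof.
suff : frob (A *m B) ^+ 2 <= (frob A * frob B) ^+ 2.
  have := frob_ge0 (A *m B); have := mulr_ge0 (frob_ge0 A) (frob_ge0 B).
  move: (frob A * frob B) => y; nra.
rewrite exprMn !sqr_frob big_distrl /=.
apply: ler_sum => i _; rewrite [X in _ <= _ * X]exchange_big big_distrr /=.
apply: ler_sum => j _; rewrite mxE.
exact: (sqr_sum_mul_le (fun k => A i k) (fun k => B k j)).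
Qed.

Lemma lipschitz_const_ge0 (R : realType) m n p q (g : 'M[R]_(m, n) -> 'M[R]_(p, q)) L :
  (0 < m)%N -> (0 < n)%N ->
  (forall M E, frob (g (M + E) - g M) <= L * frob E) -> 0 <= L.
Proof.
move=> m_gt0 n_gt0 g_lip; set i := Ordinal m_gt0; set j := Ordinal n_gt0.
pose E : 'M[R]_(m, n) := delta_mx i j.
have E_gt0 : 0 < frob E.
  have := sqr_le_sqr_frob E i j; rewrite mxE !eqxx expr1n.
  have := frob_ge0 E; nra.
by rewrite -(pmulr_lge0 _ E_gt0) (le_trans (frob_ge0 _) (g_lip 0 _)).
Qed.

Section Calculus.
Variable R : realType.

Lemma frob_inner_gradE m n (f : 'M[R]_(m, n) -> R) X V :
  differentiable f X -> frob_inner (grad f X) V = 'd f X V.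
Proof.
move=> df; rewrite frob_innerE {2}(matrix_sum_delta V) linear_sum /=.
apply: eq_bigr => i _; rewrite linear_sum; apply: eq_bigr => j _ /=.
by rewrite linearZ /= mxE -deriveE // mulrC.
Qed.

Section Lines.
Variables (V W : normedModType R) (f : V -> W) (x v : V) (t : R).

Let line_quotientE :
  (fun h : R => h^-1 *: (((fun s : R => f (s *: v + x)) \o shift t) (h *: 1)
                         - f (t *: v + x)))
  = (fun h => h^-1 *: ((f \o shift (t *: v + x)) (h *: v) - f (t *: v + x))).
Proof. by apply: funext => h /=; rewrite /shift [h *: 1]mulr1 scalerDl addrA. Qed.

Lemma derive_line : 'D_v f (t *: v + x) = 'D_1 (fun s : R => f (s *: v + x)) t.
Proof. by rewrite /derive line_quotientE. Qed.

Lemma derivable_line :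
  derivable f (t *: v + x) v -> derivable (fun s : R => f (s *: v + x)) t 1.
Proof. by rewrite /derivable line_quotientE. Qed.

End Lines.

Lemma derive1_comp_diff (W : normedModType R) (phi : W -> R) (c : R -> W) t :
  derivable c t 1 -> differentiable phi (c t) ->
  'D_1 (phi \o c) t = 'd phi (c t) ('D_1 c t).
Proof.
move=> dc dphi; have dc' : differentiable c t by apply/derivable1_diffP.
rewrite deriveE; last exact: differentiable_comp.
by rewrite diff_comp // (deriveE _ dc').
Qed.

Lemma is_derive_line_grad m n (f : 'M[R]_(m, n) -> R) M E s :
  differentiable f (s *: E + M) ->
  is_derive s 1 (fun s => f (s *: E + M)) (frob_inner (grad f (s *: E + M)) E).
Proof.
move=> df; have := derivableP (derivable_line (diff_derivable (v:=E) df)).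
by rewrite -derive_line deriveE // -frob_inner_gradE.
Qed.

Variables (m n : nat) (f : 'M[R]_(m, n) -> R).
Hypothesis f_diff : forall M, differentiable f M.

Lemma grad_eq0_at_min Z : (forall M, f Z <= f M) -> grad f Z = 0.
Proof.
move=> Z_min; apply/matrixP => i j; rewrite !mxE.
rewrite -[Z]add0r -(scale0r (delta_mx i j)) derive_line.
suff : is_derive (0 : R) 1 (fun s => f (s *: delta_mx i j + Z)) 0 by move/@derive_val.
apply: (@derive1_at_min _ _ (-1) 1); first lra.
- by move=> t _; apply/derivable_line/diff_derivable.
- by rewrite in_itv /=; apply/andP; split; lra.
- by move=> t _; rewrite scale0r add0r.
Qed.

Lemma descent_lemma L :
  (forall M E, frob (grad f (M + E) - grad f M) <= L * frob E) ->
  forall M E, f (M + E) <= f M + frob_inner (grad f M) E + L / 2 * frob E ^+ 2.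
Proof.
move=> f_lip M E; set a := frob_inner (grad f M) E; set b := L / 2 * frob E ^+ 2.
(* Gradient Lipschitzness makes [k] nonincreasing on [0, 1]. *)
pose k := (fun s : R => f (s *: E + M)) - a \*: (@id R) - b \*: (@id R) ^+ 2.
have dk (s : R) :
    is_derive s 1 k (frob_inner (grad f (s *: E + M)) E - a - b * (2 * s)).
  have dg := is_derive_line_grad (f_diff (s *: E + M)); apply: is_derive_eq.
  by rewrite [a%:A]mulr1 [(_ * _)%:A]mulr1 expr1 -[b *: _]/(b * (2 * s)); ring.
have k'_le0 (s : R) : s \in `]0, 1[%R -> k^`() s <= 0.
  move=> s01; have s_gt0 : 0 < s by rewrite (itvP s01).
  rewrite derive1E derive_val /a -frob_innerBl.
  have := frob_inner_le (grad f (s *: E + M) - grad f M) E.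
  have := f_lip M (s *: E); rewrite [M + _]addrC frobZ (gtr0_norm s_gt0).
  move=> /(ler_wpM2r (frob_ge0 E)); rewrite /b; nra.
have k_der (s : R) : derivable k s 1 by exact: ex_derive.
have k_cont : {within `[0, 1], continuous k}.
  apply: continuous_subspaceT => s; apply: differentiable_continuous.
  exact/derivable1_diffP.
have := @ler0_derive1_le_cc R k 0 1 (fun s _ => k_der s) k'_le0 k_cont 1 0.
rewrite !in_itv /= !lexx ler01 => /(_ isT isT isT).
have kE s : k s = f (s *: E + M) - a * s - b * s ^+ 2 by [].
rewrite !kE scale1r scale0r add0r expr1n expr0n [M + E]addrC /=; lra.
Qed.

Lemma frob_grad_le_dist L Z :
  (forall M, f Z <= f M) ->
  (forall M E, frob (grad f (M + E) - grad f M) <= L * frob E) ->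
  forall M, frob (grad f M) <= L * frob (M - Z).
Proof.
move=> Z_min f_lip M; have := f_lip Z (M - Z).
by rewrite [Z + _]addrC subrK (grad_eq0_at_min Z_min) subr0.
Qed.

End Calculus.

Section GramMap.
Variables (R : realType) (n r : nat).
Implicit Types H X : 'M[R]_(n, r).

Lemma is_derive_gram_line H X :
  is_derive (0 : R) 1 (fun s => (s *: H + X) *m (s *: H + X)^T)
    (H *m X^T + X *m H^T).
Proof.
set c := fun s : R => _; set B := H *m X^T + X *m H^T.
have cE (s : R) : c s =
    (s * s) *: (H *m H^T) + s *: (H *m X^T) + (s *: (X *m H^T) + X *m X^T).
  rewrite /c [(_ + X)^T]raddfD /= [(s *: H)^T]linearZ /= mulmxDl !mulmxDr.
  by rewrite -!scalemxAl -!scalemxAr scalerA.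
have quotientE (h : R) : h != 0 ->
    h^-1 *: ((c \o shift 0) (h *: 1) - c 0) = B + h *: (H *m H^T).
  move=> h0; rewrite /= /shift [h%:A]mulr1 addr0 !cE mul0r !scale0r !add0r.
  rewrite addrA addrK !scalerDr !scalerA mulrA mulVf // mul1r !scale1r.
  by rewrite -addrA addrC.
have c_lim : (fun h : R => h^-1 *: ((c \o shift 0) (h *: 1) - c 0)) @ 0^' --> B.
  have : (fun h : R => B + h *: (H *m H^T)) @ 0^' --> B.
    apply: cvg_within_filter.
    have := cvgD (cvg_cst B) (@scalel_continuous _ _ (H *m H^T) 0).
    by rewrite scale0r addr0; apply.
  apply: cvg_trans; apply: near_eq_cvg.
  by near=> h; apply/esym/quotientE; near: h; exact: nbhs_dnbhs_neq.
apply: DeriveDef; first by apply/cvg_ex; exists B.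
exact: cvg_lim c_lim.
Unshelve. all: by end_near.
Qed.

Variables (phi : 'M[R]_n -> R) (phi_diff : forall M, differentiable phi M).

Lemma derive_gram_comp X H :
  'D_H (fun Y : 'M[R]_(n, r) => phi (Y *m Y^T)) X =
  'd phi (X *m X^T) (H *m X^T + X *m H^T).
Proof.
have c_der := is_derive_gram_line H X.
rewrite -[X in 'D_H _ X]add0r -(scale0r H) derive_line.
rewrite -[fun s : R => _]/(phi \o fun s : R => (s *: H + X) *m (s *: H + X)^T).
by rewrite derive1_comp_diff // derive_val scale0r add0r.
Qed.

Lemma frob_inner_grad_gram X V :
  frob_inner (grad (fun Y : 'M[R]_(n, r) => phi (Y *m Y^T)) X) V =
  frob_inner (grad phi (X *m X^T)) (V *m X^T + X *m V^T).
Proof.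
have delta_expand : V *m X^T + X *m V^T =
    \sum_i \sum_j V i j *: (delta_mx i j *m X^T + X *m (delta_mx i j)^T).
  rewrite {1 2}(matrix_sum_delta V) raddf_sum mulmx_suml mulmx_sumr -big_split /=.
  apply: eq_bigr => i _; rewrite raddf_sum mulmx_suml mulmx_sumr -big_split /=.
  by apply: eq_bigr => j _; rewrite linearZ /= -scalemxAl -scalemxAr scalerDr.
rewrite [RHS]frob_inner_gradE // delta_expand frob_innerE !linear_sum /=.
apply: eq_bigr => i _; rewrite linear_sum; apply: eq_bigr => j _ /=.
by rewrite linearZ /= mxE derive_gram_comp mulrC.
Qed.

End GramMap.

Lemma linear_coef_eq0 (R : realFieldType) (a b : R) :
  (forall t, 0 <= t * a + t ^+ 2 * b) -> a = 0.
Proof.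
move=> nonneg; set u := (`|b| + 1)^-1.
have u_gt0 : 0 < u by rewrite invr_gt0 ltr_wpDl.
have u_norm : u * `|b| = 1 - u by rewrite /u; field; rewrite lt0r_neq0 ?ltr_wpDl.
have : (a * u) ^+ 2 <= 0.
  have := nonneg (- a * u); have := ler_wpM2l (sqr_ge0 (a * u)) (ler_norm b).
  have -> : (a * u) ^+ 2 * `|b| = a * a * u * (u * `|b|) by ring.
  rewrite u_norm; nra.
move=> sq_le0; have : (a * u) ^+ 2 == 0 by rewrite eq_le sq_le0 sqr_ge0.
by rewrite sqrf_eq0 mulf_eq0 (gt_eqF u_gt0) orbF => /eqP.
Qed.

Section Rayleigh.
Variables (R : realType) (r : nat).
Local Notation form := (form (idfun : {rmorphism R -> R})).
Implicit Types (A B : 'M[R]_r) (x y : 'rV[R]_r).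

Lemma formE A x y : form A x y = (x *m A *m y^T) 0 0.
Proof. by rewrite /form map_mx_id. Qed.

Lemma form1_sqr_frob x : form 1%:M x x = frob x ^+ 2.
Proof.
by rewrite formE mulmx1 -frob_inner_self /frob_inner mxtrace_mulC trace_mx11.
Qed.

Lemma formC_sym A x y : A^T = A -> form A x y = form A y x.
Proof.
move=> A_sym; rewrite !formE -[in RHS]A_sym.
have -> : x *m A *m y^T = (y *m A^T *m x^T)^T by rewrite !trmx_mul !trmxK mulmxA.
by rewrite mxE.
Qed.

Lemma formB_scalar A (m : R) x : form (A - m%:M) x x = form A x x - m * form 1%:M x x.
Proof. by rewrite !formE mulmxBr mul_mx_scalar mulmxBl -scalemxAl mulmx1 !mxE. Qed.

Lemma formZlr A (a : R) x : form A (a *: x) (a *: x) = a ^+ 2 * form A x x.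
Proof. by rewrite formZl formZr /= mulrA -expr2. Qed.

Lemma continuous_form A : continuous (fun x => form A x x).
Proof.
have sum_cont (F : 'I_r -> 'rV[R]_r -> R) :
    (forall i, continuous (F i)) -> continuous (fun x => \sum_i F i x).
  move=> F_cont; apply: continuous_big => [|i _]; first exact: add_continuous.
  exact: F_cont.
rewrite (_ : (fun x => _) = fun x => \sum_k (\sum_l x 0 l * A l k) * x 0 k).
  apply: (sum_cont) => k x; apply: continuousM; last exact: coord_continuous.
  apply: sum_cont => l y; apply: continuousM; first exact: coord_continuous.
  exact: cst_continuous.
apply: funext => x; rewrite formE mxE; apply: eq_bigr => k _.
by rewrite !mxE.
Qed.

Lemma isotropic_psd_mulmx_eq0 B c :
  B^T = B -> (forall x, 0 <= form B x x) -> form B c c = 0 -> c *m B = 0.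
Proof.
move=> B_sym B_psd Bc0; apply/rowP => j.
have /linear_coef_eq0 /eqP :
    forall t : R, 0 <= t * (2 * form B c 'e_j) + t ^+ 2 * form B 'e_j 'e_j.
  move=> t; have := B_psd (c + t *: 'e_j).
  rewrite formDl !formDr !formZl !formZr /= Bc0 [form B 'e_j c]formC_sym //; lra.
by rewrite mulf_eq0 pnatr_eq0 /= formE trmx_delta -colE !mxE => /eqP.
Qed.

Lemma unit_sphere_compact : compact [set x : 'rV[R]_r | form 1%:M x x = 1].
Proof.
apply: bounded_closed_compact.
  exists 1; split; first by rewrite num_real.
  move=> M M_gt1 x x_unit; apply: le_trans (ltW M_gt1).
  rewrite [leLHS]/Num.norm /= mx_normrE; apply: bigmax_le => //= ij _.
  have := sqr_le_sqr_frob x ij.1 ij.2; rewrite -form1_sqr_frob x_unit.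
  rewrite -real_normK ?num_real //; have := normr_ge0 (x ij.1 ij.2); nra.
rewrite (_ : [set x | _] = (fun x => form 1%:M x x) @^-1` [set 1]) //.
by apply: preimage_closed; [move=> x _; exact: continuous_form | exact: closed_eq].
Qed.

Lemma exists_rayleigh_min A : (0 < r)%N ->
  exists2 c, form 1%:M c c = 1 & forall y, form A c c * form 1%:M y y <= form A y y.
Proof.
move=> r_gt0; set S := [set x : 'rV[R]_r | form 1%:M x x = 1].
have S_neq0 : S !=set0.
  by exists 'e_(Ordinal r_gt0); rewrite /S /= formee mxE eqxx.
have [c /[!inE] Sc c_min] := EVT_min_rV S_neq0 unit_sphere_compact
  (continuous_subspaceT (@continuous_form A)).
exists c => // y; rewrite form1_sqr_frob.
have [/frob0_eq0 ->|y_neq0] := eqVneq (frob y) 0.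
  by rewrite frob0 expr0n mulr0 form0l.
have y_gt0 : 0 < frob y by rewrite lt0r y_neq0 frob_ge0.
have := c_min ((frob y)^-1 *: y); rewrite inE /S /= formZlr form1_sqr_frob.
rewrite exprVn mulVf ?sqrf_eq0 // => /(_ erefl); rewrite formZlr.
by rewrite exprVn ler_pdivlMl ?exprn_gt0 // mulrC.
Qed.

Lemma lambda_min_le_rayleigh A lam : A^T = A -> is_lambda_min A lam ->
  forall x, lam * frob x ^+ 2 <= form A x x.
Proof.
move=> A_sym [lam_eig lam_min] x.
have r_gt0 : (0 < r)%N.
  case/eigenvalueP: lam_eig => v _; apply: contraNT; rewrite -eqn0Ngt => /eqP r0.
  by apply/eqP/rowP => j; have := ltn_ord j; rewrite [in X in (_ < X)%N]r0.
have [c c_unit c_min] := exists_rayleigh_min A r_gt0.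
set m := form A c c.
have B_sym : (A - m%:M)^T = A - m%:M by rewrite linearB /= tr_scalar_mx A_sym.
have B_psd y : 0 <= form (A - m%:M) y y by rewrite formB_scalar subr_ge0 c_min.
have Bc0 : form (A - m%:M) c c = 0 by rewrite formB_scalar c_unit mulr1 subrr.
(* [A - m] is psd and isotropic at [c], so [c] is an eigenvector for [m]. *)
have m_eig : eigenvalue A m.
  apply/eigenvalueP; exists c.
    apply/eqP; rewrite -subr_eq0 -mul_mx_scalar -mulmxBr.
    exact/eqP/isotropic_psd_mulmx_eq0.
  by apply: contra_eq_neq c_unit => ->; rewrite form0l eq_sym oner_neq0.
rewrite -form1_sqr_frob; apply: le_trans (c_min x).
by rewrite ler_wpM2r ?lam_min // form1_sqr_frob sqr_ge0.
Qed.

End Rayleigh.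

Section LocalNorm.
Variables (R : realType) (n r : nat) (X : 'M[R]_(n, r)) (S : 'M[R]_r) (eta lam : R).
Hypotheses (eta_ge0 : 0 <= eta) (lam_min : is_lambda_min (X^T *m X) lam).
Hypotheses (lam_eta_gt0 : 0 < lam + eta) (S_sym : S^T = S).
Hypothesis S_sqr : S *m S = X^T *m X + eta%:M.
Implicit Type V : 'M[R]_(n, r).
Local Notation form := (form (idfun : {rmorphism R -> R})).

Lemma lambda_min_gram_le V : lam * frob V ^+ 2 <= frob (V *m X^T) ^+ 2.
Proof.
have gram_sym : (X^T *m X)^T = X^T *m X by rewrite trmx_mul trmxK.
have form_gram v : form (X^T *m X) v v = frob (v *m X^T) ^+ 2.
  by rewrite -form1_sqr_frob !formE mulmx1 trmx_mul trmxK !mulmxA.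
rewrite !sqr_frob_rows mulr_sumr; apply: ler_sum => i _.
by rewrite row_mul -form_gram lambda_min_le_rayleigh.
Qed.

Lemma sqr_frob_mulS V : frob (V *m S) ^+ 2 = frob (V *m X^T) ^+ 2 + eta * frob V ^+ 2.
Proof.
rewrite -!frob_inner_self /frob_inner !trmx_mul trmxK S_sym.
rewrite mulmxA mxtrace_mulC !mulmxA S_sqr -mulmxA mulmxDl mxtraceD mul_scalar_mx.
rewrite mxtraceZ; congr (_ + _).
by rewrite -[X^T *m X *m _]mulmxA mxtrace_mulC mulmxA.
Qed.

Lemma frob_mul_trmx_le_mulS V : frob (V *m X^T) <= frob (V *m S).
Proof.
have : frob (V *m X^T) ^+ 2 <= frob (V *m S) ^+ 2.
  by rewrite sqr_frob_mulS lerDl mulr_ge0 ?sqr_ge0.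
have := frob_ge0 (V *m X^T); have := frob_ge0 (V *m S); nra.
Qed.

Lemma sqr_frob_le_mulS V : frob V ^+ 2 * (lam + eta) <= frob (V *m S) ^+ 2.
Proof. by rewrite sqr_frob_mulS; have := lambda_min_gram_le V; lra. Qed.

Lemma frob_gram_le_mulS V : frob (V *m V^T) <= frob (V *m S) ^+ 2 / (lam + eta).
Proof.
rewrite ler_pdivlMr //; apply: le_trans (sqr_frob_le_mulS V).
by rewrite ler_pM2r // expr2 -[X in _ <= _ * X]frob_trmx ler_frob_mulmx.
Qed.

Lemma frob_gram_increment_le_mulS V :
  frob (V *m X^T + X *m V^T + V *m V^T) <=
  2 * frob (V *m S) + frob (V *m S) ^+ 2 / (lam + eta).
Proof.
have sym_term : frob (X *m V^T) = frob (V *m X^T) by rewrite -frob_trmx trmx_mul trmxK.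
apply: le_trans (ler_frobD _ _) _; apply: lerD (frob_gram_le_mulS V).
apply: le_trans (ler_frobD _ _) _; rewrite sym_term.
by have := frob_mul_trmx_le_mulS V; lra.
Qed.

End LocalNorm.

Theorem lemma22 (R : realType) (n r : nat) (phi : 'M[R]_n -> R) (L : R)
  (Mstar : 'M[R]_n)
  (Hdiff : forall M : 'M[R]_n, differentiable phi M)
  (Hlip : forall M E : 'M[R]_n,
     frob (grad phi (M + E) - grad phi M) <= L * frob E)
  (Hmin : forall M : 'M[R]_n, phi Mstar <= phi M)
  (Hpsd : psd Mstar)
  (X V : 'M[R]_(n, r)) (eta lam : R) (S : 'M[R]_r)
  (Heta : 0 <= eta)
  (Hlam : is_lambda_min (X^T *m X) lam)
  (Hpos : 0 < lam + eta)
  (HSpsd : psd S) (HS : S *m S = X^T *m X + eta%:M) :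
  let f := fun Y : 'M[R]_(n, r) => phi (Y *m Y^T) in
  let nV := frob (V *m S) in
  let ell := L * (4 + (2 * frob (X *m X^T - Mstar) + 4 * nV) / (lam + eta)
                    + (nV / (lam + eta)) ^+ 2) in
  f (X + V) <= f X + frob_inner (grad f X) V + ell / 2 * nV ^+ 2.
Proof.
cbv zeta beta; set nV := frob (V *m S).
(* For n = 0 nothing forces L >= 0, but then both sides are equal. *)
have [n0|n_gt0] := posnP n.
  subst n; rewrite /nV [V]flatmx0 addr0 mul0mx frob0 /frob_inner mulmx0 mxtrace0.
  by rewrite expr0n mulr0 !addr0.
have L_ge0 := lipschitz_const_ge0 n_gt0 n_gt0 Hlip.
set M := X *m X^T; set P := V *m X^T + X *m V^T; set Q := V *m V^T.
set D := frob (M - Mstar); set b := nV ^+ 2 / (lam + eta).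
have f_XV : phi ((X + V) *m (X + V)^T) = phi (M + (P + Q)).
  by rewrite raddfD /= mulmxDl !mulmxDr /M /P /Q -!addrA [X *m V^T + _]addrCA.
have grad_f : frob_inner (grad (fun Y => phi (Y *m Y^T)) X) V =
    frob_inner (grad phi M) P by exact: frob_inner_grad_gram.
have [S_sym _] := HSpsd.
have GQ_le : frob_inner (grad phi M) Q <= L * D * b.
  apply: le_trans (frob_inner_le _ _) _; apply: ler_pM; rewrite ?frob_ge0 //.
    exact: frob_grad_le_dist.
  exact: frob_gram_le_mulS Hlam Hpos S_sym HS V.
have PQ_le : L / 2 * frob (P + Q) ^+ 2 <= L / 2 * (2 * nV + b) ^+ 2.
  apply: ler_wpM2l; first lra.
  have := frob_gram_increment_le_mulS Heta Hlam Hpos S_sym HS V.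
  have := frob_ge0 (P + Q); rewrite -/P -/Q -/nV -/b; nra.
have ell_split : L * (4 + (2 * D + 4 * nV) / (lam + eta) + (nV / (lam + eta)) ^+ 2) / 2
    * nV ^+ 2 = L * D * b + L / 2 * (2 * nV + b) ^+ 2.
  by rewrite /b; field; exact: lt0r_neq0.
have := descent_lemma Hdiff Hlip M (P + Q).
rewrite f_XV grad_f frob_innerDr; lra.
Qed.
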